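(* Let $c,d$ be positive integers, $\alpha,\delta\in(0,1]$, and $C_0\subseteq\mathbb{F}_2^d$ a linear code with minimum distance $d_0$, all constants, with $d_0\delta>2$; let $\varepsilon_0=\frac{d_0}{2}-\frac1\delta>0$. Let $G=(L\cup R,E)$ be a $(c,d,\alpha,\delta)$-bipartite expander with $L=[n]$, let $x\in\mathbb{F}_2^n$ and $y\in T(G,C_0)$ with $d_H(x,y)\le\alpha n$. Consider the algorithm $\mathsf{RandDecode}$ which, on input $x$, repeatedly replaces $x$ by $\mathsf{RandFlip}(x)$ as long as $U(x)\neq\emptyset$, and then returns $x$. Then, on input $x$, $\mathsf{RandDecode}$ outputs $y$ in $O(n)$ time with probability $1-o(1)$.
   Context: Binary linear codes; $d_H$ Hamming distance. A bipartite graph $G=(L\cup R,E)$ is $(c,d)$-regular if left vertices have degree $c$ and right vertices degree $d$; $N(S)$ denotes the neighborhood of a vertex set $S$. A $(c,d,\alpha,\delta)$-bipartite expander is a $(c,d)$-regular bipartite graph with $|N(S)|\ge\delta c|S|$ for all $S\subseteq L$, $|S|\le\alpha|L|$. Tanner code: $L=[n]$; for each $v\in R$ a fixed ordering of $N(v)$ gives $x_{N(v)}\in\mathbb{F}_2^d$ (restriction of $x$ to $N(v)$); $T(G,C_0)=\{x\in\mathbb{F}_2^n: x_{N(v)}\in C_0\ \forall v\in R\}$. $U(x)=\{v\in R: x_{N(v)}\notin C_0\}$ (unsatisfied checks). For $z\in\mathbb{F}_2^d$, $\mathsf{Decode}(z)$ is the codeword of $C_0$ closest to $z$ in Hamming distance,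 ties broken by the lexicographically smallest. $\mathsf{RandFlip}(x)$: set $t=d_0/2$ and $p_1=\dots=p_n=0$; for each $v\in R$, let $w_v=\mathsf{Decode}(x_{N(v)})$; if $1\le d_H(w_v,x_{N(v)})<t$, let $i$ be the smallest element of $N(v)$ at which $w_v$ and $x_{N(v)}$ differ and increase $p_i$ by $\frac{t-d_H(w_v,x_{N(v)})}{ct}$. Then flip each $x_i$ independently with probability $p_i$ and return the result. The parameters $c,d,\alpha,\delta,C_0$ are constants, $n$ grows, and $o(1)$, $O(n)$ are with respect to $n$. Running time is in the RAM model with adjacency lists, with the implementation in which $U(x)$ and the values $p_i$ are maintained in data structures (initialized once in $O(n)$ time) allowing $U(x)$ to be enumerated in $O(|U(x)|)$ time and updated in $O(1)$ time per bit flip, so that only unsatisfied checks and indices with $p_i\neq0$ are enumerated. *)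

From HB Require Import structures.
From mathcomp Require Import all_boot all_order all_algebra.
From mathcomp Require Import reals.

Set Implicit Arguments.
Unset Strict Implicit.
Unset Printing Implicit Defensive.

Import Order.TTheory GRing.Theory Num.Theory.
Local Open Scope ring_scope.

Definition word (n : nat) := {ffun 'I_n -> bool}.

Definition zero_word (n : nat) : word n := [ffun => false].
Definition xorw (n : nat) (a b : word n) : word n := [ffun i => a i (+) b i].

Definition dH (n : nat) (a b : word n) : nat := #|[set i | a i != b i]|.

Definition linear_code (d : nat) (C : {set word d}) : Prop :=
  zero_word d \in C /\ (forall a b, a \in C -> b \in C -> xorw a b \in C).

Definition min_distance (d : nat) (C : {set word d}) (d0 : nat) : Prop :=
  (exists a b, [/\ a \in C, b \in C, a != b & dH a b = d0]) /\
  (forall a b, a \in C -> b \in C -> a != b -> (d0 <= dH a b)%N).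

Section Graph.
Variables (n m d : nat).
(* Bipartite graph with L = 'I_n, R = 'I_m; right vertex v has the ordered
   neighbourhood nbr v (a d-tuple of left vertices); this also fixes the
   ordering of N(v) used in the Tanner code. *)
Variable nbr : 'I_m -> d.-tuple 'I_n.

Definition biregular (c : nat) : Prop :=
  (forall v, uniq (nbr v)) /\ (forall i : 'I_n, #|[set v | i \in nbr v]| = c).

Definition nbhd (S : {set 'I_n}) : {set 'I_m} :=
  [set v | [exists j, tnth (nbr v) j \in S]].

Definition expander (R : realType) (c : nat) (alpha delta : R) : Prop :=
  biregular c /\
  (forall S : {set 'I_n}, #|S|%:R <= alpha * n%:R ->
     delta * c%:R * #|S|%:R <= (#|nbhd S|)%:R).

Definition restr (x : word n) (v : 'I_m) : word d :=
  [ffun j => x (tnth (nbr v) j)].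

Variable C0 : {set word d}.

Definition in_tanner (y : word n) : Prop := forall v, restr y v \in C0.

Definition unsat (x : word n) : {set 'I_m} := [set v | restr x v \notin C0].

(* lexicographic rank: first coordinate most significant, 0 < 1 *)
Definition lexrank (w : word d) : nat := (\sum_(j < d) (w j : nat) * 2 ^ (d.-1 - j))%N.

Definition dec_key (z w : word d) : nat := (dH w z * 2 ^ d + lexrank w)%N.

(* Decode(z): closest codeword, ties broken by lexicographically smallest *)
Definition decode (z : word d) : word d :=
  odflt (zero_word d) [pick w in C0 | [forall w' in C0, (dec_key z w <= dec_key z w')%N]].

Definition dist_v (x : word n) (v : 'I_m) : nat := dH (decode (restr x v)) (restr x v).

Definition differs_at (x : word n) (v : 'I_m) (i : 'I_n) : bool :=
  [exists j, (tnth (nbr v) j == i) && (decode (restr x v) j != restr x v j)].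

Definition firstdiff (x : word n) (v : 'I_m) : option 'I_n :=
  [pick i : 'I_n | differs_at x v i && [forall i' : 'I_n, differs_at x v i' ==> (i <= i')%N]].

Variables (R : realType) (c d0 : nat).

Definition tpar : R := d0%:R / 2.

Definition flipprob (x : word n) (i : 'I_n) : R :=
  \sum_(v < m | [&& (1 <= dist_v x v)%N, (dist_v x v)%:R < tpar & firstdiff x v == Some i])
     (tpar - (dist_v x v)%:R) / (c%:R * tpar).

(* Pr[RandFlip(x) = x'] : each bit flipped independently with prob p_i *)
Definition trans (x x' : word n) : R :=
  \prod_(i < n) (if x' i != x i then flipprob x i else 1 - flipprob x i).

Variable y : word n.

(* succ T b x = probability that RandDecode started at x halts within T rounds,
   with output y, and with total per-round cost  sum_t |U(x_t)|  at most b.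
   (Per-round running time of the stated implementation is Theta(|U(x_t)|).) *)
Fixpoint succ (T b : nat) (x : word n) : R :=
  match T with
  | 0 => if unsat x == set0 then (x == y)%:R else 0
  | T'.+1 =>
      if unsat x == set0 then (x == y)%:R
      else if (#|unsat x| <= b)%N then
        \sum_(x' : word n) trans x x' * succ T' (b - #|unsat x|) x'
      else 0
  end.

(* Since every executed round costs >= 1, b rounds suffice. *)
Definition success_prob (b : nat) (x : word n) : R := succ b b x.

End Graph.

From HB Require Import structures.
From mathcomp Require Import all_boot all_order all_algebra.
From mathcomp Require Import reals sequences exp.
From mathcomp Require Import ring lra zify.
Import Order.TTheory GRing.Theory Num.Theory.

Set Implicit Arguments.
Unset Strict Implicit.
Unset Printing Implicit Defensive.

(* Let E(x) be the set of positions where x differs from the codeword y, and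
   t = d0/2.  A check v with w_v > 0 erroneous neighbours contributes at least
   (t - w_v)/(c t) to the signed flip mass  sum_{i in E} p_i - sum_{i notin E} p_i:
   its local decoding is either y_{N(v)}, and then it pushes an erroneous bit with
   exactly this weight, or a codeword at distance >= 2t from y_{N(v)}.  Summing
   over N(E(x)) and using expansion, the signed mass is >= (delta - 1/t) |E(x)|,
   while sum_i p_i <= |E(x)|.  Hence exp(eta |E(x)|) shrinks in expectation by a
   factor exp(-theta |E(x)|) while |E(x)| <= alpha n, and as a round costs
   |U(x)| <= c |E(x)| this potential also pays for the running time: after T
   rounds with budget b the failure probability is at most
   T exp(-theta alpha n) + exp(eta |E(x)| - theta b / c). *)

Section Hamming.
Variable k : nat.
Implicit Types a b e : word k.

Lemma dHC a b : dH a b = dH b a.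
Proof. by apply: eq_card => i; rewrite !inE eq_sym. Qed.

Lemma dH_eq0 a b : (dH a b == 0) = (a == b).
Proof.
rewrite cards_eq0; apply/eqP/eqP => [ab0 | ->]; last by apply/setP => i; rewrite !inE eqxx.
by apply/ffunP => i; move/setP/(_ i): ab0; rewrite !inE => /negbFE/eqP.
Qed.

Lemma dHxx a : dH a a = 0.
Proof. by apply/eqP; rewrite dH_eq0. Qed.

Lemma dH_triangle a b e : dH a e <= dH a b + dH b e.
Proof.
apply: leq_trans (leq_card_setU _ _); apply: subset_leq_card; apply/subsetP => i.
by rewrite !inE; case: (a i); case: (b i); case: (e i).
Qed.

End Hamming.

Lemma sum_expn2_rev_lt d : \sum_(j < d) 2 ^ (d.-1 - j) < 2 ^ d.
Proof.
elim: d => [|d IH]; first by rewrite big_ord0.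
rewrite big_ord_recl subn0 expnS mul2n -addnn ltn_add2l.
by congr (_ < _): IH; apply: eq_bigr => j _; rewrite /bump /= subnS predn_sub.
Qed.

Lemma lexrank_lt d (w : word d) : lexrank w < 2 ^ d.
Proof.
apply: leq_ltn_trans (sum_expn2_rev_lt d); apply: leq_sum => j _.
by case: (w j); rewrite ?mul1n ?mul0n.
Qed.

Section Decode.
Variables (d : nat) (C0 : {set word d}).
Hypothesis C0_neq0 : C0 != set0.

Lemma dec_key_dH (z w w' : word d) : dec_key z w <= dec_key z w' -> dH w z <= dH w' z.
Proof.
rewrite /dec_key => le_key; rewrite -ltnS -(ltn_pmul2r (expn_gt0 2 d)).
have := lexrank_lt w'; nia.
Qed.

Lemma decodeP z :
  decode C0 z \in C0 /\ forall w, w \in C0 -> dH (decode C0 z) z <= dH w z.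
Proof.
rewrite /decode; case: pickP => [w /andP[wC /forall_inP min_w] | none] /=.
  by split=> // w' /min_w /dec_key_dH.
have [w0 w0C] := set0Pn _ C0_neq0.
have [w wC min_w] := arg_minnP (dec_key z) w0C.
by move: (none w) => /=; rewrite (wC : w \in C0); case: forall_inP.
Qed.

Lemma decode_in z : decode C0 z \in C0.
Proof. by case: (decodeP z). Qed.

Lemma decode_nearest z w : w \in C0 -> dH (decode C0 z) z <= dH w z.
Proof. by case: (decodeP z) => _; apply. Qed.

Lemma decode_id z : z \in C0 -> decode C0 z = z.
Proof.
by move=> zC; apply/eqP; rewrite -dH_eq0 -leqn0 -(dHxx z) decode_nearest.
Qed.

End Decode.

Section Biregular.
Variables (n m d c : nat) (nbr : 'I_m -> d.-tuple 'I_n).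
Hypothesis breg : biregular nbr c.
Implicit Type S : {set 'I_n}.

Definition deg_in S v := #|[set j | tnth (nbr v) j \in S]|.

Lemma deg_in_card S v : deg_in S v = #|[set i in S | i \in nbr v]|.
Proof.
rewrite /deg_in -(card_imset _ (tuple_uniqP _ (breg.1 v))).
apply: eq_card => i; rewrite inE; apply/imsetP/andP => [[j] | [iS /tnthP[j ij]]].
  by rewrite inE => jS ->; rewrite mem_tnth.
by exists j; rewrite // inE -ij.
Qed.

Lemma sum_deg_in S : \sum_v deg_in S v = c * #|S|.
Proof.
have deg_sum v : deg_in S v = \sum_(i in S) (i \in nbr v).
  rewrite deg_in_card -sum1_card big_mkcond [RHS]big_mkcond /=.
  by apply: eq_bigr => i _; rewrite !inE; case: (i \in S); case: (i \in nbr v).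
rewrite (eq_bigr _ (fun v _ => deg_sum v)) exchange_big /= mulnC -sum_nat_const.
apply: eq_bigr => i _; rewrite -(breg.2 i) -sum1_card [RHS]big_mkcond /=.
by apply: eq_bigr => v _; rewrite inE; case: (i \in nbr v).
Qed.

Lemma mem_nbhd S v : (v \in nbhd nbr S) = (0 < deg_in S v).
Proof.
by rewrite inE card_gt0; apply/existsP/set0Pn => -[j]; rewrite ?inE => jS; exists j; rewrite ?inE.
Qed.

Lemma card_nbhdE S : #|nbhd nbr S| = \sum_v (0 < deg_in S v).
Proof. by rewrite -sum1_card big_mkcond /=; apply: eq_bigr => v _; rewrite mem_nbhd; case: ifP. Qed.

Lemma card_nbhd_le S : #|nbhd nbr S| <= c * #|S|.
Proof. by rewrite card_nbhdE -sum_deg_in; apply: leq_sum => v _; case: (deg_in S v). Qed.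

End Biregular.

Section FirstDiff.
Variables (n m d : nat) (nbr : 'I_m -> d.-tuple 'I_n) (C0 : {set word d}).

Lemma firstdiffP x v i : firstdiff nbr C0 x v = Some i ->
  exists2 j, tnth (nbr v) j = i & decode C0 (restr nbr x v) j != restr nbr x v j.
Proof.
rewrite /firstdiff; case: pickP => // i' /andP[/existsP[j /andP[/eqP ji' ne]] _] [<-].
by exists j.
Qed.

Lemma firstdiff_nbr x v i : firstdiff nbr C0 x v = Some i -> i \in nbr v.
Proof. by case/firstdiffP => j <- _; apply: mem_tnth. Qed.

Lemma firstdiff_Some x v : decode C0 (restr nbr x v) != restr nbr x v ->
  exists i, firstdiff nbr C0 x v = Some i.
Proof.
move=> neq; have [j neq_j] : exists j, decode C0 (restr nbr x v) j != restr nbr x v j.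
  by apply/existsP; move: neq; apply: contraR; rewrite negb_exists => /forallP eq_j;
     apply/eqP/ffunP => j; apply/eqP/negPn.
have diff_j : differs_at nbr C0 x v (tnth (nbr v) j) by apply/existsP; exists j; rewrite eqxx.
rewrite /firstdiff; case: pickP => [i _ | none]; first by exists i.
have [i diff_i min_i] := arg_minnP (fun i : 'I_n => nat_of_ord i) diff_j.
by move: (none i) => /=; rewrite diff_i; case: forallP => // -[] i'; apply/implyP/min_i.
Qed.

End FirstDiff.

Local Open Scope ring_scope.

Lemma sum_prod_flip (R : comPzRingType) n (p : 'I_n -> R) (x : word n)
    (f : 'I_n -> bool -> R) :
  \sum_(x' : word n) (\prod_i (if x' i != x i then p i else 1 - p i)) * \prod_i f i (x' i) =
  \prod_i ((1 - p i) * f i (x i) + p i * f i (~~ x i)).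
Proof.
have prodM (x' : word n) : (\prod_i (if x' i != x i then p i else 1 - p i)) * \prod_i f i (x' i) =
    \prod_i ((if x' i != x i then p i else 1 - p i) * f i (x' i)) by rewrite big_split.
rewrite (eq_bigr _ (fun x' _ => prodM x')).
rewrite -(bigA_distr_bigA (fun i b => (if b != x i then p i else 1 - p i) * f i b)) /=.
by apply: eq_bigr => i _; rewrite big_bool /=; case: (x i) => /=; rewrite addrC.
Qed.

(* Flipping a bit multiplies exp(eta |E|) by exp(-eta) if it was erroneous and by
   exp(eta) otherwise, i.e. by at most exp(-(1 - exp(-eta)) sign + (exp(eta) +
   exp(-eta) - 2)) per unit of flip mass; a signed mass >= gamma |E| and a total
   mass <= |E| then give this decay rate per erroneous position. *)
Definition drift_rate (R : realType) (eta gamma : R) : R :=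
  (1 - expR (- eta)) * gamma - (expR eta + expR (- eta) - 2).
Arguments drift_rate : simpl never.

Lemma expR_add_expRN_ge2 (R : realType) (x : R) : 2 <= expR x + expR (- x).
Proof. by have := expR_ge1Dx x; have := expR_ge1Dx (- x); lra. Qed.

Lemma drift_rate_le (R : realType) (eta gamma : R) :
  0 <= eta -> gamma <= 1 -> drift_rate eta gamma <= eta.
Proof.
move=> eta_ge0 gamma_le1; rewrite /drift_rate.
have A_ge0 : 0 <= 1 - expR (- eta) by rewrite subr_ge0 expR_le1 oppr_le0.
have := expR_ge1Dx (- eta); have := expR_add_expRN_ge2 eta.
nra.
Qed.

Lemma drift_rate_gt0 (R : realType) (gamma : R) :
  0 < gamma -> gamma <= 1 -> 0 < drift_rate (gamma / 4) gamma.
Proof.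
move=> gamma_gt0 gamma_le1; set eta := gamma / 4.
have eta_gt0 : 0 < eta by rewrite /eta; lra.
have eta_le : eta <= 1 / 4 by rewrite /eta; lra.
have gammaE : gamma = 4 * eta by rewrite /eta; lra.
set u := expR eta; set v := expR (- eta).
have uv : u * v = 1 by rewrite -expRD subrr expR0.
have u_ge : 1 + eta <= u := expR_ge1Dx eta.
have v_ge : 1 - eta <= v := expR_ge1Dx (- eta).
have u_gt0 : 0 < u := expR_gt0 eta.
have v_gt0 : 0 < v := expR_gt0 (- eta).
have h1 : eta <= (1 - v) * (1 + eta).
  have : v * (1 + eta) <= v * u by rewrite ler_wpM2l ?(ltW v_gt0).
  by rewrite [v * u]mulrC uv; lra.
have h2 : (u - 1) * (1 - eta) <= eta.
  have : u * (1 - eta) <= u * v by rewrite ler_wpM2l ?(ltW u_gt0).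
  by rewrite uv; lra.
have P_gt0 : 0 < (1 + eta) * (1 - eta) by rewrite mulr_gt0 //; lra.
rewrite -(pmulr_lgt0 _ P_gt0) /drift_rate -/u -/v gammaE.
have h1' : eta * ((1 - eta) * (1 + 4 * eta)) <=
    (1 - v) * (1 + eta) * ((1 - eta) * (1 + 4 * eta)).
  by rewrite ler_wpM2r // mulr_ge0 //; lra.
have h2' : (u - 1) * (1 - eta) * (1 + eta) <= eta * (1 + eta) by rewrite ler_wpM2r //; lra.
have : 0 < eta ^+ 2 * (1 - 2 * eta) by rewrite mulr_gt0 ?exprn_gt0 //; lra.
nra.
Qed.

Lemma flip_factor_le (R : realType) (eta q : R) (e : bool) :
  0 <= eta -> 0 <= q <= 1 ->
  (1 - q) * expR (eta * e%:R) + q * expR (eta * (~~ e)%:R) <=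
  expR (eta * e%:R) * expR (- (1 - expR (- eta)) * ((if e then 1 else -1) * q)
                            + (expR eta + expR (- eta) - 2) * q).
Proof.
move=> eta_ge0 /andP[q_ge0 q_le1].
have B_ge0 : 0 <= expR eta + expR (- eta) - 2 by rewrite subr_ge0 expR_add_expRN_ge2.
case: e => /=; rewrite ?mulr1n ?mulr0n ?mulr1 ?mulr0 expR0; last first.
  rewrite mul1r; apply: le_trans (expR_ge1Dx _); rewrite le_eqVlt; apply/orP; left.
  by apply/eqP; ring.
have inv : expR eta * expR (- eta) = 1 by rewrite -expRD subrr expR0.
apply: le_trans (ler_wpM2l (expR_ge0 eta) (expR_ge1Dx _)).
have : 0 <= expR eta * ((expR eta + expR (- eta) - 2) * q) by rewrite !mulr_ge0 ?expR_ge0.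
have -> : expR eta * (1 + (- (1 - expR (- eta)) * (1 * q) + (expR eta + expR (- eta) - 2) * q))
    = (1 - q) * expR eta + q * (expR eta * expR (- eta))
      + expR eta * ((expR eta + expR (- eta) - 2) * q) by ring.
by rewrite inv; lra.
Qed.

Section FlipProbabilities.
Variables (R : realType) (n m d c d0 : nat) (nbr : 'I_m -> d.-tuple 'I_n).
Variables (C0 : {set word d}) (y : word n).
Hypotheses (C0_neq0 : C0 != set0) (breg : biregular nbr c) (yT : in_tanner nbr C0 y).
Hypothesis min_dist : forall a b, a \in C0 -> b \in C0 -> a != b -> (d0 <= dH a b)%N.
Hypotheses (c_gt0 : (0 < c)%N) (d0_gt0 : (0 < d0)%N).

Local Notation t := (tpar R d0).
Local Notation dist := (dist_v nbr C0).
Local Notation decoded x v := (decode C0 (restr nbr x v)).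
Local Notation p := (flipprob nbr C0 R c d0).
Local Notation tr := (trans nbr C0 R c d0).

Definition err (x : word n) := [set i | x i != y i].
Local Notation nerr x v := (deg_in nbr (err x) v).

Lemma dH_restr x v : dH (restr nbr x v) (restr nbr y v) = nerr x v.
Proof. by apply: eq_card => j; rewrite !inE !ffunE. Qed.

Lemma dist_le_nerr x v : (dist x v <= nerr x v)%N.
Proof. by rewrite -dH_restr dHC; apply: decode_nearest. Qed.

Lemma dist_eq0 x v : (dist x v == 0%N) = (restr nbr x v \in C0).
Proof.
rewrite dH_eq0; apply/eqP/idP => [<- | /(decode_id C0_neq0) //].
exact: decode_in.
Qed.

Lemma decoded_far x v : decoded x v != restr nbr y v -> (d0 <= dist x v + nerr x v)%N.
Proof.
move=> ne; apply: leq_trans (min_dist (decode_in C0_neq0 _) (yT v) ne) _.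
by rewrite -dH_restr; apply: dH_triangle.
Qed.

Lemma unsat_sub_nbhd x : unsat nbr C0 x \subset nbhd nbr (err x).
Proof.
apply/subsetP => v; rewrite mem_nbhd inE; apply: contraR.
by rewrite -eqn0Ngt -dH_restr dH_eq0 => /eqP ->; apply: yT.
Qed.

Lemma card_unsat_le x : (#|unsat nbr C0 x| <= c * #|err x|)%N.
Proof. exact: leq_trans (subset_leq_card (unsat_sub_nbhd x)) (card_nbhd_le breg _). Qed.

Definition active x v := (0 < dist x v)%N && ((dist x v)%:R < t).
Definition vote x v : R := (t - (dist x v)%:R) / (c%:R * t).
Definition err_sign x i : R := if x i != y i then 1 else -1.

Lemma tpar_gt0 : 0 < t.
Proof. by rewrite divr_gt0 // ltr0n. Qed.

Lemma ct_gt0 : 0 < c%:R * t.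
Proof. by rewrite mulr_gt0 ?ltr0n ?tpar_gt0. Qed.

Lemma vote_ge0 x v : active x v -> 0 <= vote x v.
Proof. by case/andP => _ lt_t; rewrite divr_ge0 ?subr_ge0 ?(ltW lt_t) ?(ltW ct_gt0). Qed.

Lemma vote_le x v : vote x v <= c%:R^-1.
Proof.
rewrite ler_pdivrMr ?ct_gt0 // mulrA mulVf ?pnatr_eq0 -?lt0n // mul1r.
by rewrite lerBlDr lerDl ler0n.
Qed.

Lemma active_nerr_gt0 x v : active x v -> (0 < nerr x v)%N.
Proof. by case/andP => dist_gt0 _; apply: leq_trans dist_gt0 (dist_le_nerr x v). Qed.

Lemma active_firstdiff x v : active x v -> exists i, firstdiff nbr C0 x v = Some i.
Proof. by case/andP => dist_gt0 _; apply: firstdiff_Some; rewrite -dH_eq0 -lt0n. Qed.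

Lemma sum_flipprob (F : 'I_n -> R) x :
  \sum_i F i * p x i =
  \sum_v (if active x v then oapp F 0 (firstdiff nbr C0 x v) * vote x v else 0).
Proof.
under eq_bigr do rewrite big_distrr /= big_mkcond /=.
rewrite exchange_big /=; apply: eq_bigr => v _; rewrite /active.
case: (0 < dist x v)%N => /=; last by rewrite big1.
case: ((dist x v)%:R < t) => /=; last by rewrite big1.
case fd_v: (firstdiff nbr C0 x v) => [i|] /=; last by rewrite mul0r big1.
rewrite (bigD1 i) //= eqxx big1 ?addr0 // => j /negbTE ne_ji.
by have -> : (Some i == Some j) = false by apply: contraFF ne_ji => /eqP[->].
Qed.

Lemma inactive_nerr_ge x v : (0 < nerr x v)%N -> ~~ active x v -> t <= (nerr x v)%:R.
Proof.
move=> nerr_gt0; rewrite negb_and -eqn0Ngt -real_leNgt ?num_real //.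
case/orP => [dist0 | t_le]; last by apply: le_trans t_le _; rewrite ler_nat dist_le_nerr.
have dec_x : decoded x v = restr nbr x v by apply/eqP; rewrite -dH_eq0.
have x_ne_y : restr nbr x v != restr nbr y v by rewrite -dH_eq0 dH_restr -lt0n.
have := @decoded_far x v; rewrite dec_x (eqP dist0) add0n -(ler_nat R) => /(_ x_ne_y) d0_le.
by rewrite /tpar; have := ler0n R d0; lra.
Qed.

Lemma signed_vote_ge x v : (0 < nerr x v)%N ->
  (t - (nerr x v)%:R) / (c%:R * t) <=
  (if active x v then oapp (err_sign x) 0 (firstdiff nbr C0 x v) * vote x v else 0).
Proof.
move=> nerr_gt0; case: ifPn => [act | inact]; last first.
  by rewrite pmulr_lle0 ?invr_gt0 ?ct_gt0 // subr_le0 inactive_nerr_ge.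
have [i fd_i] := active_firstdiff act; rewrite fd_i /=.
have [dec_y | dec_ny] := eqVneq (decoded x v) (restr nbr y v).
  have [j ji diff_j] := firstdiffP fd_i.
  have -> : err_sign x i = 1.
    by move: diff_j; rewrite /err_sign dec_y !ffunE ji eq_sym => ->.
  by rewrite mul1r /vote /dist_v dec_y dHC dH_restr.
have vote0 := vote_ge0 act; have far := decoded_far dec_ny.
apply: le_trans (_ : - vote x v <= _); last first.
  by rewrite /err_sign; case: ifP => _; rewrite ?mul1r ?mulN1r; lra.
rewrite /vote -mulNr ler_wpM2r ?invr_ge0 ?(ltW ct_gt0) //.
have d0_le : d0%:R <= (dist x v)%:R + (nerr x v)%:R :> R by rewrite -natrD ler_nat.
by rewrite /tpar; lra.
Qed.

Lemma sum_signed_flipprob_ge (delta : R) x :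
  delta * c%:R * #|err x|%:R <= #|nbhd nbr (err x)|%:R ->
  (delta - t^-1) * #|err x|%:R <= \sum_i err_sign x i * p x i.
Proof.
move=> expand; rewrite sum_flipprob.
apply: le_trans (_ : \sum_v (t * (0 < nerr x v)%N%:R - (nerr x v)%:R) / (c%:R * t) <= _).
  rewrite -mulr_suml sumrB -mulr_sumr -!natr_sum -card_nbhdE (sum_deg_in breg).
  rewrite ler_pdivlMr ?ct_gt0 // natrM.
  have : t * (delta * c%:R * #|err x|%:R) <= t * #|nbhd nbr (err x)|%:R.
    by rewrite ler_wpM2l ?(ltW tpar_gt0).
  have -> : (delta - t^-1) * #|err x|%:R * (c%:R * t) =
      t * (delta * c%:R * #|err x|%:R) - c%:R * #|err x|%:R * (t^-1 * t) by ring.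
  by rewrite mulVf ?mulr1 ?lt0r_neq0 ?tpar_gt0 //; lra.
apply: ler_sum => v _; case: (posnP (nerr x v)) => [nerr0 | nerr_gt0].
  have inact : ~~ active x v by apply/negP => /active_nerr_gt0; rewrite nerr0.
  by rewrite (negbTE inact) nerr0 mulr0 subrr mul0r.
by rewrite mulr1 signed_vote_ge.
Qed.

Lemma flipprob_ge0 x i : 0 <= p x i.
Proof. by apply: sumr_ge0 => v /and3P[d1 d2 _]; apply: (@vote_ge0 x v); apply/andP. Qed.

Lemma flipprob_le1 x i : p x i <= 1.
Proof.
apply: le_trans (_ : \sum_(v | i \in nbr v) c%:R^-1 <= _).
  rewrite /flipprob big_mkcond [X in _ <= X]big_mkcond; apply: ler_sum => v _.
  case: ifP => [/and3P[_ _ /eqP fd_i] | _].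
    by rewrite (firstdiff_nbr fd_i); apply: vote_le.
  by case: ifP; rewrite ?invr_ge0 ?ler0n.
rewrite sumr_const; case: breg => _ /(_ i); rewrite cardsE => ->.
by rewrite -[_ *+ c]mulr_natr mulVf // pnatr_eq0 -lt0n.
Qed.

Lemma sum_flipprob_le x : \sum_i p x i <= #|err x|%:R.
Proof.
have := sum_flipprob (fun _ => 1) x; under eq_bigr do rewrite mul1r; move=> ->.
apply: le_trans (_ : \sum_v (0 < nerr x v)%N%:R / c%:R <= _).
  apply: ler_sum => v _; case: ifPn => [act | _]; last by rewrite divr_ge0 ?ler0n.
  rewrite (active_nerr_gt0 act) mul1r; apply: le_trans (vote_le x v).
  by case: (firstdiff nbr C0 x v) => [i|] /=; rewrite ?mul1r ?mul0r ?vote_ge0.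
rewrite -mulr_suml -natr_sum -card_nbhdE ler_pdivrMr ?ltr0n //.
by rewrite -natrM ler_nat mulnC card_nbhd_le.
Qed.

Lemma eq_of_unsat_eq0 (delta : R) x : 0 < delta - t^-1 ->
  delta * c%:R * #|err x|%:R <= #|nbhd nbr (err x)|%:R ->
  unsat nbr C0 x = set0 -> x = y.
Proof.
move=> gamma_gt0 expand unsat0.
have := sum_signed_flipprob_ge expand; rewrite sum_flipprob big1 => [le0 | v _]; last first.
  have : v \notin unsat nbr C0 x by rewrite unsat0 inE.
  by rewrite inE negbK -dist_eq0 => /eqP dist0; rewrite /active dist0.
apply/eqP; rewrite -dH_eq0 -(eqr_nat R) eq_le ler0n andbT.
by rewrite -(pmulr_rle0 _ gamma_gt0).
Qed.

Lemma sum_trans_prod x (f : 'I_n -> bool -> R) :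
  \sum_x' tr x x' * \prod_i f i (x' i) =
  \prod_i ((1 - p x i) * f i (x i) + p x i * f i (~~ x i)).
Proof. exact: sum_prod_flip. Qed.

Lemma sum_trans x : \sum_x' tr x x' = 1.
Proof.
have := sum_trans_prod x (fun _ _ => 1).
have -> : \prod_i ((1 - p x i) * 1 + p x i * 1) = 1.
  by apply: big1 => i _; rewrite !mulr1 subrK.
by move=> <-; apply: eq_bigr => x' _; rewrite big1_eq mulr1.
Qed.

Lemma trans_ge0 x x' : 0 <= tr x x'.
Proof.
by apply: prodr_ge0 => i _; case: ifP => _; rewrite ?subr_ge0 ?flipprob_ge0 ?flipprob_le1.
Qed.

Lemma succ_ge0 T b x : 0 <= succ nbr C0 R c d0 y T b x.
Proof.
elim: T b x => [|T IH] b x /=; first by case: ifP.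
case: ifP => _ //; case: ifP => _ //.
by apply: sumr_ge0 => x' _; rewrite mulr_ge0 ?trans_ge0.
Qed.

Definition potential (eta : R) x := expR (eta * #|err x|%:R).

Lemma potential_prod eta x : potential eta x = \prod_i expR (eta * (x i != y i)%:R).
Proof.
rewrite /potential -expR_sum -mulr_sumr -natr_sum -sum1_card big_mkcond /=.
by congr (expR (eta * _%:R)); apply: eq_bigr => i _; rewrite inE; case: (x i != y i).
Qed.

Lemma expected_potential_le eta x : 0 <= eta ->
  \sum_x' tr x x' * potential eta x' <=
  potential eta x * expR (- (1 - expR (- eta)) * \sum_i err_sign x i * p x i
                    + (expR eta + expR (- eta) - 2) * \sum_i p x i).
Proof.
move=> eta_ge0; under eq_bigr do rewrite potential_prod.
rewrite (sum_trans_prod x (fun i b => expR (eta * (b != y i)%:R))) potential_prod.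
rewrite 2!mulr_sumr -big_split expR_sum -big_split /=.
apply: ler_prod => i _; apply/andP; split.
  by rewrite addr_ge0 ?mulr_ge0 ?expR_ge0 ?flipprob_ge0 ?subr_ge0 ?flipprob_le1.
rewrite (_ : (~~ x i != y i) = ~~ (x i != y i)); last by case: (x i); case: (y i).
by apply: flip_factor_le; rewrite ?flipprob_ge0 ?flipprob_le1.
Qed.

Lemma expected_potential_good delta eta x : 0 <= eta ->
  delta * c%:R * #|err x|%:R <= #|nbhd nbr (err x)|%:R ->
  \sum_x' tr x x' * potential eta x' <=
  expR ((eta - drift_rate eta (delta - t^-1)) * #|err x|%:R).
Proof.
move=> eta_ge0 expand; apply: le_trans (expected_potential_le x eta_ge0) _.
rewrite /potential -expRD ler_expR /drift_rate.
have A_ge0 : 0 <= 1 - expR (- eta) by rewrite subr_ge0 expR_le1 oppr_le0.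
have B_ge0 : 0 <= expR eta + expR (- eta) - 2 by rewrite subr_ge0 expR_add_expRN_ge2.
have := sum_signed_flipprob_ge expand; have := sum_flipprob_le x.
nra.
Qed.

Section Convergence.
Variables (alpha delta eta : R).
Hypothesis expand : forall S : {set 'I_n},
  #|S|%:R <= alpha * n%:R -> delta * c%:R * #|S|%:R <= #|nbhd nbr S|%:R.
Hypotheses (gamma_gt0 : 0 < delta - t^-1) (eta_ge0 : 0 <= eta).
Local Notation theta := (drift_rate eta (delta - t^-1)).
Hypotheses (theta_ge0 : 0 <= theta) (theta_le_eta : theta <= eta).
Local Notation kappa := (theta / c%:R).
Local Notation q := (expR (- (theta * (alpha * n%:R)))).
Local Notation good x := (#|err x|%:R <= alpha * n%:R).

Lemma kappa_unsat_le x : kappa * #|unsat nbr C0 x|%:R <= theta * #|err x|%:R.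
Proof.
rewrite mulrAC ler_pdivrMr ?ltr0n // -mulrA ler_wpM2l //.
by rewrite mulrC -natrM ler_nat card_unsat_le.
Qed.

Lemma budget_exceeded x b : (b < #|unsat nbr C0 x|)%N ->
  1 <= expR (eta * #|err x|%:R - kappa * b%:R).
Proof.
move=> lt_bu; apply: le_trans (expR_ge1Dx _); rewrite lerDl subr_ge0.
have kb_le : kappa * b%:R <= kappa * #|unsat nbr C0 x|%:R.
  by rewrite ler_wpM2l ?divr_ge0 ?ler0n // ler_nat ltnW.
apply: le_trans kb_le _; apply: le_trans (kappa_unsat_le x) _.
by rewrite ler_wpM2r ?ler0n.
Qed.

Lemma fail_prob_step T b x (f : word n -> R) :
  (#|unsat nbr C0 x| <= b)%N -> good x -> (forall x', 0 <= f x') ->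
  (forall x', good x' -> 1 - f x' <= T%:R * q +
     expR (eta * #|err x'|%:R - kappa * (b - #|unsat nbr C0 x|)%:R)) ->
  1 - \sum_x' tr x x' * f x' <= T.+1%:R * q + expR (eta * #|err x|%:R - kappa * b%:R).
Proof.
move=> le_ub good_x f_ge0 IH; set u := #|unsat nbr C0 x|.
set E := expR (eta * (alpha * n%:R)); have E_gt0 : 0 < E := expR_gt0 _.
set M := \sum_x' tr x x' * potential eta x'.
have M_le : M <= expR ((eta - theta) * #|err x|%:R) :=
  expected_potential_good eta_ge0 (expand good_x).
rewrite -{1}(sum_trans x) -sumrB.
apply: le_trans (_ : \sum_x' tr x x' * (T%:R * q +
    expR (eta * #|err x'|%:R - kappa * (b - u)%:R) + potential eta x' / E) <= _).
  apply: ler_sum => x' _; rewrite -{1}(mulr1 (tr x x')) -mulrBr ler_wpM2l ?trans_ge0 //.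
  have pot_ge0 : 0 <= potential eta x' / E by rewrite divr_ge0 ?expR_ge0 ?(ltW E_gt0).
  have [good_x' | bad_x'] := boolP (good x'); first by have := IH x' good_x'; lra.
  (* outside the expanding region the potential exceeds E, paying for the failure *)
  have : 1 <= potential eta x' / E.
    by rewrite ler_pdivlMr // mul1r ler_expR ler_wpM2l // ltW // ltNge.
  have : 0 <= T%:R * q by rewrite mulr_ge0 ?ler0n ?expR_ge0.
  by have := f_ge0 x'; have := expR_ge0 (eta * #|err x'|%:R - kappa * (b - u)%:R); lra.
under eq_bigr do rewrite !mulrDr.
rewrite !big_split /= -mulr_suml sum_trans mul1r.
have -> : \sum_x' tr x x' * expR (eta * #|err x'|%:R - kappa * (b - u)%:R) =
    M / expR (kappa * (b - u)%:R).
  by rewrite /M mulr_suml; apply: eq_bigr => x' _; rewrite expRB mulrA.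
have -> : \sum_x' tr x x' * (potential eta x' / E) = M / E.
  by rewrite /M mulr_suml; apply: eq_bigr => x' _; rewrite mulrA.
have budget : M / expR (kappa * (b - u)%:R) <= expR (eta * #|err x|%:R - kappa * b%:R).
  rewrite ler_pdivrMr ?expR_gt0 // -expRD; apply: le_trans M_le _.
  by rewrite ler_expR natrB //; have := kappa_unsat_le x; lra.
have escape : M / E <= q.
  rewrite ler_pdivrMr // -expRD; apply: le_trans M_le _; rewrite ler_expR.
  have : 0 <= (eta - theta) * (alpha * n%:R - #|err x|%:R) by rewrite mulr_ge0 ?subr_ge0.
  by nra.
by rewrite -addn1 natrD [(_ + _) * q]mulrDl; lra.
Qed.

Lemma fail_prob_le T b x : (b <= T)%N -> good x ->
  1 - succ nbr C0 R c d0 y T b x <= T%:R * q + expR (eta * #|err x|%:R - kappa * b%:R).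
Proof.
elim: T b x => [|T IH] b x le_bT good_x /=; case: ifP => [/eqP unsat0 | unsat_ne0].
- by rewrite (eq_of_unsat_eq0 gamma_gt0 (expand good_x) unsat0) eqxx subrr mul0r add0r expR_ge0.
- rewrite subr0 mul0r add0r; apply: budget_exceeded.
  by move: le_bT; rewrite leqn0 => /eqP ->; rewrite card_gt0 unsat_ne0.
- rewrite (eq_of_unsat_eq0 gamma_gt0 (expand good_x) unsat0) eqxx subrr.
  by rewrite addr_ge0 ?expR_ge0 ?mulr_ge0 ?ler0n ?expR_ge0.
- case: leqP => [le_ub | lt_bu]; last first.
    rewrite subr0; apply: le_trans (budget_exceeded lt_bu) _.
    by rewrite lerDr mulr_ge0 ?ler0n ?expR_ge0.
  apply: fail_prob_step => // [x' | x' good_x']; first exact: succ_ge0.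
  have u_gt0 : (0 < #|unsat nbr C0 x|)%N by rewrite card_gt0 unsat_ne0.
  apply: IH; rewrite // leq_subLR; apply: leq_trans le_bT _.
  by rewrite -add1n leq_add2r.
Qed.

Lemma success_prob_ge K x : alpha <= 1 -> (eta + theta) * c%:R <= theta * K%:R -> good x ->
  1 - ((K * n)%:R + 1) * q <= success_prob nbr C0 R c d0 y (K * n) x.
Proof.
move=> alpha_le1 K_large good_x; have := fail_prob_le (leqnn (K * n)) good_x.
suff : expR (eta * #|err x|%:R - kappa * (K * n)%:R) <= q by rewrite /success_prob; lra.
rewrite ler_expR natrM.
have K_large' : eta + theta <= kappa * K%:R by rewrite mulrAC ler_pdivlMr ?ltr0n.
have h1 : eta * #|err x|%:R <= eta * (alpha * n%:R) by rewrite ler_wpM2l.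
have h2 : (eta + theta) * (alpha * n%:R) <= (eta + theta) * n%:R :=
  ler_wpM2l (addr_ge0 eta_ge0 theta_ge0) (ler_piMl (ler0n R n) alpha_le1).
have h3 : (eta + theta) * n%:R <= kappa * K%:R * n%:R by rewrite ler_wpM2r.
by lra.
Qed.

End Convergence.
End FlipProbabilities.

Lemma linear_expN_le (R : realType) (K : nat) (a eps : R) : 0 < a -> 0 < eps ->
  exists N : nat, forall n : nat, (N <= n)%N -> ((K * n)%:R + 1) * expR (- (a * n%:R)) <= eps.
Proof.
move=> a_gt0 eps_gt0; set Z := 2 * (K%:R + 1) / (a ^+ 2 * eps).
have aae_gt0 : 0 < a ^+ 2 * eps by rewrite mulr_gt0 ?exprn_gt0.
have Z_ge0 : 0 <= Z by rewrite divr_ge0 ?(ltW aae_gt0) // mulr_ge0 // addr_ge0 ?ler0n.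
exists (Num.Def.archi_bound Z).+1 => n le_Nn.
have n_ge1 : 1 <= n%:R :> R by rewrite ler1n (leq_trans (ltn0Sn _) le_Nn).
have Z_lt : Z < n%:R by apply: lt_trans (archi_boundP Z_ge0) _; rewrite ltr_nat.
have HZ : 2 * (K%:R + 1) < n%:R * (a ^+ 2 * eps) by rewrite -ltr_pdivrMr.
have exp_ge : (a * n%:R) ^+ 2 / 2 <= expR (a * n%:R).
  have := expR_ge1Dxn 1 (mulr_ge0 (ltW a_gt0) (ler0n R n)).
  by have -> : (2`!)%:R = 2 :> R by []; lra.
rewrite expRN ler_pdivrMr ?expR_gt0 //.
have h1 : (K * n)%:R + 1 <= (K%:R + 1) * n%:R :> R by rewrite natrM; nra.
have h2 : 2 * (K%:R + 1) * n%:R <= n%:R * (a ^+ 2 * eps) * n%:R.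
  by rewrite ler_wpM2r ?ler0n ?(ltW HZ).
have h3 : eps * ((a * n%:R) ^+ 2 / 2) <= eps * expR (a * n%:R).
  by rewrite ler_wpM2l ?(ltW eps_gt0).
nra.
Qed.

Unset Implicit Arguments.

Theorem theorem3p6 (R : realType) (c d : nat) (alpha delta : R)
    (C0 : {set word d}) (d0 : nat) :
  (0 < c)%N -> (0 < d)%N ->
  0 < alpha <= 1 -> 0 < delta <= 1 ->
  linear_code C0 -> min_distance C0 d0 ->
  2 < d0%:R * delta ->
  exists K : nat, forall eps : R, 0 < eps -> exists N : nat,
    forall n : nat, (N <= n)%N ->
    forall (m : nat) (nbr : 'I_m -> d.-tuple 'I_n) (x y : word n),
      expander nbr c alpha delta ->
      in_tanner nbr C0 y ->
      (dH x y)%:R <= alpha * n%:R ->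
      1 - eps <= success_prob nbr C0 R c d0 y (K * n) x.
Proof.
move=> c_gt0 _ /andP[alpha_gt0 alpha_le1] /andP[_ delta_le1] [zeroC _] [_ min_dist].
move=> d0_delta.
have C0_neq0 : C0 != set0 by apply/set0Pn; exists (zero_word d).
have d0_gt0 : (0 < d0)%N.
  by rewrite lt0n; apply/eqP => d00; move: d0_delta; rewrite d00 mul0r; lra.
set gamma := delta - (tpar R d0)^-1.
have gamma_gt0 : 0 < gamma.
  by rewrite /gamma /tpar invf_div subr_gt0 ltr_pdivrMr ?ltr0n //; lra.
have gamma_le1 : gamma <= 1.
  have : 0 <= (tpar R d0)^-1 by rewrite invr_ge0 divr_ge0 ?ler0n.
  by rewrite /gamma; lra.
set eta := gamma / 4; have eta_ge0 : 0 <= eta by rewrite /eta; lra.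
have theta_gt0 := drift_rate_gt0 gamma_gt0 gamma_le1.
have theta_le := drift_rate_le eta_ge0 gamma_le1.
set theta := drift_rate eta gamma in theta_gt0 theta_le *.
have [K K_large] : exists K : nat, (eta + theta) * c%:R <= theta * K%:R.
  exists (Num.Def.archi_bound (theta^-1 * ((eta + theta) * c%:R))).
  rewrite -ler_pdivrMl //; apply/ltW; apply: archi_boundP.
  have ge0 := ltW theta_gt0.
  by rewrite !mulr_ge0 ?invr_ge0 ?ler0n ?(addr_ge0 eta_ge0 ge0).
exists K => eps eps_gt0.
have [N N_large] := linear_expN_le K (mulr_gt0 theta_gt0 alpha_gt0) eps_gt0.
exists N => n le_Nn m nbr x y [breg expand] yT dxy.
have := success_prob_ge C0_neq0 breg yT min_dist c_gt0 d0_gt0 expand gamma_gt0 eta_ge0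
  (ltW theta_gt0) theta_le alpha_le1 K_large dxy.
rewrite -/gamma -/theta; have := N_large n le_Nn; rewrite -mulrA.
lra.
Qed.
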